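(* A finite skew brace $A$ has $\Lambda(A)$ with exactly one vertex if and only if $A$ is isomorphic to a skew brace on a set $F\times\mathbb{Z}/2\mathbb{Z}$ with operations \[(f_1,k_1)+(f_2,k_2)=\big(f_1+(-1)^{k_1}f_2+k_1k_2y,\,k_1+k_2\big),\] \[(f_1,k_1)\circ(f_2,k_2)=\big(f_1+(-1)^{k_1}f_2+\psi(f_1,k_1,k_2)+k_1k_2y,\,k_1+k_2\big),\] where $F\neq\{0\}$ is a finite abelian group, $y\in F$ satisfies $2y=0$, and $\psi\colon F\times\mathbb{Z}/2\mathbb{Z}\times\mathbb{Z}/2\mathbb{Z}\to F$ is a surjective map of the form \[\psi(f,k_1,k_2)=[k_2]\big(\phi(f)-[k_1]z\big),\] with $\phi\in\operatorname{End}(F)$ and $z\in F$ satisfying $\phi(z)=\phi(y)-2z$ and $\phi(\phi(f))=-2\phi(f)$ for all $f\in F$.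
   Context: A skew brace is a triple $(A,+,\circ)$ where $(A,+)$ and $(A,\circ)$ are groups with $a\circ(b+c)=a\circ b-a+a\circ c$. $\lambda_a(b)=-a+a\circ b$ defines an action of $(A,\circ)$ on $(A,+)$ by automorphisms. $\Lambda(A)$ is the graph whose vertices are the $\lambda$-orbits of size $>1$, two distinct vertices $L_1,L_2$ adjacent iff $\gcd(|L_1|,|L_2|)\ne1$. For $k\in\mathbb{Z}/2\mathbb{Z}$, $[k]\in\{0,1\}$ denotes its representative (equivalently $[k]=\frac{1-(-1)^k}{2}$); products such as $k_1k_2y$ mean $[k_1][k_2]y$ and $(-1)^k$ is computed with any representative. *)

From HB Require Import structures.
From mathcomp Require Import all_boot all_order all_algebra.
Set Implicit Arguments. Unset Strict Implicit. Unset Printing Implicit Defensive.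
Import GRing.Theory.
Local Open Scope ring_scope.

Record skew_brace (T : Type) := SkewBrace {
  sb_add : T -> T -> T;
  sb_zero : T;
  sb_opp : T -> T;
  sb_circ : T -> T -> T;
  sb_one : T;
  sb_inv : T -> T;
  sb_addA : associative sb_add;
  sb_add0x : left_id sb_zero sb_add;
  sb_addx0 : right_id sb_zero sb_add;
  sb_addNx : forall x, sb_add (sb_opp x) x = sb_zero;
  sb_addxN : forall x, sb_add x (sb_opp x) = sb_zero;
  sb_circA : associative sb_circ;
  sb_circ1x : left_id sb_one sb_circ;
  sb_circx1 : right_id sb_one sb_circ;
  sb_circVx : forall x, sb_circ (sb_inv x) x = sb_one;
  sb_circxV : forall x, sb_circ x (sb_inv x) = sb_one;
  sb_compat : forall a b c,
    sb_circ a (sb_add b c) = sb_add (sb_add (sb_circ a b) (sb_opp a)) (sb_circ a c)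
}.

Section Lambda.
Variables (T : finType) (A : skew_brace T).

Definition sb_lambda (a b : T) : T := sb_add A (sb_opp A a) (sb_circ A a b).

Definition lambda_orbit (b : T) : {set T} := [set sb_lambda a b | a : T]%N.

Definition Lambda_vertices : {set {set T}} :=
  [set L in [set lambda_orbit b | b : T] | (1 < #|L|)%N].

(* adjacency of Lambda(A) (not needed for the vertex count) *)
Definition Lambda_adj (L1 L2 : {set T}) : bool :=
  [&& L1 \in Lambda_vertices, L2 \in Lambda_vertices, L1 != L2 &
      gcdn #|L1| #|L2| != 1%N].
End Lambda.

Definition sb_iso_to (T T' : Type) (A : skew_brace T)
  (add' circ' : T' -> T' -> T') : Prop :=
  exists f : T -> T', bijective f /\
    forall a b, f (sb_add A a b) = add' (f a) (f b) /\
                f (sb_circ A a b) = circ' (f a) (f b).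

Section Model.
Variables (F : zmodType) (y : F) (psi : F -> 'Z_2 -> 'Z_2 -> F).

Definition sgnZ2 (k : 'Z_2) (f : F) : F := f *~ ((-1) ^+ (nat_of_ord k)).

Definition model_add (p q : F * 'Z_2) : F * 'Z_2 :=
  (p.1 + sgnZ2 p.2 q.1 + y *+ (nat_of_ord p.2 * nat_of_ord q.2), p.2 + q.2).

Definition model_circ (p q : F * 'Z_2) : F * 'Z_2 :=
  (p.1 + sgnZ2 p.2 q.1 + psi p.1 p.2 q.2 + y *+ (nat_of_ord p.2 * nat_of_ord q.2),
   p.2 + q.2).
End Model.

Definition model_psi (F : zmodType) (phi : F -> F) (z : F)
  (f : F) (k1 k2 : 'Z_2) : F :=
  (phi f - z *+ nat_of_ord k1) *+ nat_of_ord k2.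

(* Let H be the set of lambda-fixed points of a finite skew brace A; it is a
   subgroup of (A,+) on which o and + agree, and the vertices of Lambda(A) are
   the orbits of the points outside H.

   If Lambda(A) has one vertex, the orbit O of some t is
   the complement of H.  By orbit-stabilizer |O| divides |A| = |H| + |O|, so
   H has index two with other coset t + H = O.  Writing lambda_a(t) = t +
   delta(a), the map delta : (A,o) -> (H,+) is an onto homomorphism; since
   lambda fixes t + t, every h in H inverts t (h + t + h = t), which forces H
   to be abelian.  Then F := H, y := t + t, phi := -delta, z := -delta(t) and
   the coordinates u |-> (u,0), u + t |-> (u,1) give the announced model.

   In the model lambda_(f1,k1)(f2,k2) =
   (f2 + (-1)^k1 psi(f1,k1,k2), k2): the points (f,0) are fixed, and since
   psi is onto, the points (f,1) form a single orbit, of size |F| > 1. *)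

From HB Require Import structures.
From mathcomp Require Import all_boot all_order all_algebra.
Import GRing.Theory.

Section AdditiveGroup.
Context {T : Type} {A : skew_brace T}.
Local Notation "x ⊕ y" := (sb_add A x y) (at level 50, left associativity).
Local Notation "x ⊙ y" := (sb_circ A x y) (at level 40, left associativity).
Local Notation "⊖ x" := (sb_opp A x) (at level 35, right associativity).
Local Notation zero := (sb_zero A).

Lemma sb_addKl a b : ⊖ a ⊕ (a ⊕ b) = b.
Proof. by rewrite sb_addA sb_addNx sb_add0x. Qed.

Lemma sb_addNKl a b : a ⊕ (⊖ a ⊕ b) = b.
Proof. by rewrite sb_addA sb_addxN sb_add0x. Qed.

Lemma sb_addKr a b : b ⊕ a ⊕ ⊖ a = b.
Proof. by rewrite -sb_addA sb_addxN sb_addx0. Qed.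

Lemma sb_addNKr a b : b ⊕ ⊖ a ⊕ a = b.
Proof. by rewrite -sb_addA sb_addNx sb_addx0. Qed.

Lemma sb_addIl {a b c} : a ⊕ b = a ⊕ c -> b = c.
Proof. by move=> e; rewrite -(sb_addKl a b) e sb_addKl. Qed.

Lemma sb_addIr {a b c} : b ⊕ a = c ⊕ a -> b = c.
Proof. by move=> e; rewrite -(sb_addKr a b) e sb_addKr. Qed.

Lemma sb_oppK a : ⊖ ⊖ a = a.
Proof. by apply: (sb_addIl (a := ⊖ a)); rewrite sb_addxN sb_addNx. Qed.

Lemma sb_opp0 : ⊖ zero = zero.
Proof. by rewrite -{2}(sb_addNx A zero) sb_addx0. Qed.

Lemma sb_oppD a b : ⊖ (a ⊕ b) = ⊖ b ⊕ ⊖ a.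
Proof.
apply: (sb_addIl (a := a ⊕ b)); rewrite sb_addxN -sb_addA (sb_addA _ b).
by rewrite sb_addxN sb_add0x sb_addxN.
Qed.

Lemma sb_opp_unique a b : a ⊕ b = zero -> b = ⊖ a.
Proof. by move=> e; apply: (sb_addIl (a := a)); rewrite e sb_addxN. Qed.

Lemma sb_circx0 a : a ⊙ zero = a.
Proof.
have := sb_compat A a zero zero; rewrite sb_add0x -{1}(sb_add0x A (a ⊙ zero)).
by move/sb_addIr => e; rewrite -(sb_addNKr a (a ⊙ zero)) -e sb_add0x.
Qed.

Lemma sb_one0 : sb_one A = zero.
Proof. by rewrite -(sb_circx0 (sb_one A)) sb_circ1x. Qed.

Lemma sb_circ0x a : zero ⊙ a = a.
Proof. by rewrite -sb_one0 sb_circ1x. Qed.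
End AdditiveGroup.

Section LambdaAction.
Context {T : finType} {A : skew_brace T}.
Local Notation "x ⊕ y" := (sb_add A x y) (at level 50, left associativity).
Local Notation "x ⊙ y" := (sb_circ A x y) (at level 40, left associativity).
Local Notation "⊖ x" := (sb_opp A x) (at level 35, right associativity).
Local Notation zero := (sb_zero A).
Local Notation lam := (sb_lambda A).

Lemma lambda_circ a b : a ⊕ lam a b = a ⊙ b.
Proof. by rewrite /sb_lambda sb_addNKl. Qed.

Lemma lambdaD a b c : lam a (b ⊕ c) = lam a b ⊕ lam a c.
Proof. by rewrite /sb_lambda sb_compat !sb_addA. Qed.

Lemma lambda0 a : lam a zero = zero.
Proof. by rewrite /sb_lambda sb_circx0 sb_addNx. Qed.

Lemma lambdaN a b : lam a (⊖ b) = ⊖ lam a b.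
Proof. by apply: sb_opp_unique; rewrite -lambdaD sb_addxN lambda0. Qed.

Lemma lambda_id b : lam zero b = b.
Proof. by rewrite /sb_lambda sb_opp0 sb_circ0x sb_add0x. Qed.

Lemma lambdaM a b c : lam (a ⊙ b) c = lam a (lam b c).
Proof.
rewrite [lam b c]/sb_lambda lambdaD lambdaN /sb_lambda sb_circA sb_oppD sb_oppK.
by rewrite !sb_addA sb_addKr.
Qed.

Lemma lambdaK a b : lam (sb_inv A a) (lam a b) = b.
Proof. by rewrite -lambdaM sb_circVx sb_one0 lambda_id. Qed.
End LambdaAction.

Definition lambda_fixed {T : finType} (A : skew_brace T) : {set T} :=
  [set b | [forall a, sb_lambda A a b == b]].

Section FixedPointsAndOrbits.
Context {T : finType} {A : skew_brace T}.
Local Notation "x ⊕ y" := (sb_add A x y) (at level 50, left associativity).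
Local Notation "x ⊙ y" := (sb_circ A x y) (at level 40, left associativity).
Local Notation "⊖ x" := (sb_opp A x) (at level 35, right associativity).
Local Notation zero := (sb_zero A).
Local Notation lam := (sb_lambda A).
Local Notation H := (lambda_fixed A).

Lemma lambda_fixedP b : reflect (forall a, lam a b = b) (b \in H).
Proof. by rewrite inE; apply: (iffP forallP) => h a; apply/eqP. Qed.

Lemma fixed0 : zero \in H.
Proof. by apply/lambda_fixedP => a; rewrite lambda0. Qed.

Lemma fixedD {a b} : a \in H -> b \in H -> a ⊕ b \in H.
Proof.
move=> /lambda_fixedP ha /lambda_fixedP hb.
by apply/lambda_fixedP => c; rewrite lambdaD ha hb.
Qed.

Lemma fixedN {a} : a \in H -> ⊖ a \in H.
Proof. by move=> /lambda_fixedP ha; apply/lambda_fixedP => c; rewrite lambdaN ha. Qed.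

Lemma fixedDr {a b} : a \in H -> a ⊕ b \in H -> b \in H.
Proof. by move=> ha hab; rewrite -(sb_addKl (A:=A) a b); apply: fixedD (fixedN ha) hab. Qed.

Lemma fixedDl {a b} : b \in H -> a ⊕ b \in H -> a \in H.
Proof. by move=> hb hab; rewrite -(sb_addKr (A:=A) b a); apply: fixedD hab (fixedN hb). Qed.

Lemma circ_fixed a {h} : h \in H -> a ⊙ h = a ⊕ h.
Proof. by move=> /lambda_fixedP hH; rewrite -lambda_circ hH. Qed.

Lemma orbit_self b : b \in lambda_orbit A b.
Proof. by apply/imsetP; exists zero; rewrite ?lambda_id. Qed.

Lemma orbit_fixed {b} : b \in H -> lambda_orbit A b = [set b].
Proof.
move=> /lambda_fixedP hb; apply/setP => x; rewrite inE; apply/imsetP/eqP.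
  by move=> [a _ ->]; rewrite hb.
by move=> ->; exists zero; rewrite ?lambda_id.
Qed.

Lemma orbit_nonfixed {b} : b \notin H -> (1 < #|lambda_orbit A b|)%N.
Proof.
rewrite inE negb_forall => /existsP [a ha].
rewrite (cardsD1 b) orbit_self add1n ltnS card_gt0; apply/set0Pn.
by exists (lam a b); rewrite !inE ha; apply/imsetP; exists a.
Qed.

Lemma orbit_nonfixedW {b x} : b \notin H -> x \in lambda_orbit A b -> x \notin H.
Proof.
move=> hb /imsetP [a _ ->]; apply: contra hb => /lambda_fixedP h.
by rewrite -(lambdaK (A:=A) a b) h; apply/lambda_fixedP.
Qed.

Lemma orbit_eq t x : x \in lambda_orbit A t -> lambda_orbit A x = lambda_orbit A t.
Proof.
move=> /imsetP [a _ ->]; apply/setP => y; apply/imsetP/imsetP => [] [b _ ->].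
  by exists (b ⊙ a); rewrite ?lambdaM.
by exists (b ⊙ sb_inv A a); rewrite // lambdaM lambdaK.
Qed.

(* Orbit-stabilizer: every lambda-orbit has size dividing |A|. *)
Lemma orbit_card_dvd t : (#|lambda_orbit A t| %| #|T|)%N.
Proof.
pose S := [set a | lam a t == t].
suff -> : #|T| = (#|lambda_orbit A t| * #|S|)%N by apply: dvdn_mulr.
rewrite -[#|T|]sum1_card (partition_big_imset (fun a => lam a t)) /=.
rewrite -sum_nat_const; apply: eq_bigr => o /imsetP [b _ ->].
rewrite sum1_card.
have circ_inj : injective (sb_circ A b).
  move=> a1 a2 e; rewrite -(sb_circ1x A a1) -(sb_circVx A b) -sb_circA e.
  by rewrite sb_circA sb_circVx sb_circ1x.
rewrite -(card_imset S circ_inj); apply: eq_card => x; apply/eqP/imsetP.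
- move=> hx; exists (sb_inv A b ⊙ x).
    by rewrite inE lambdaM hx lambdaK.
  by rewrite sb_circA sb_circxV sb_one0 sb_circ0x.
- by move=> [a]; rewrite inE => /eqP ha ->; rewrite lambdaM ha.
Qed.
End FixedPointsAndOrbits.

Lemma one_vertexP (T : finType) (A : skew_brace T) :
  #|Lambda_vertices A| = 1%N <->
  exists2 t, t \notin lambda_fixed A &
    forall x, x \notin lambda_fixed A -> x \in lambda_orbit A t.
Proof.
split.
  move=> /eqP /cards1P [L hL].
  have : L \in Lambda_vertices A by rewrite hL set11.
  rewrite !inE => /andP [/imsetP [t _ eL] big_t]; subst L.
  have t_nfix : t \notin lambda_fixed A.
    by apply: contraL big_t => /orbit_fixed ->; rewrite cards1.
  exists t => // x x_nfix.
  have : lambda_orbit A x \in Lambda_vertices A.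
    by rewrite !inE (orbit_nonfixed x_nfix) andbT; apply/imsetP; exists x.
  by rewrite hL !inE => /eqP <-; apply: orbit_self.
move=> [t t_nfix orbit_t]; apply/eqP/cards1P; exists (lambda_orbit A t).
apply/setP => L; rewrite !inE; apply/andP/eqP.
  move=> [/imsetP [x _ ->]]; apply: contraTeq => ne_t.
  have x_fix : x \in lambda_fixed A.
    by apply: contraR ne_t => /orbit_t /orbit_eq ->.
  by rewrite (orbit_fixed x_fix) cards1.
by move=> ->; rewrite (orbit_nonfixed t_nfix); split=> //; apply/imsetP; exists t.
Qed.

Local Open Scope ring_scope.

Lemma Z2_cases (k : 'Z_2) : k = 0 \/ k = 1.
Proof. by case: k => [[|[|m]] hm]; [left; apply: val_inj|right; apply: val_inj|]. Qed.

Lemma Z2_val0 : nat_of_ord (0 : 'Z_2) = 0%N. Proof. by []. Qed.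
Lemma Z2_val1 : nat_of_ord (1 : 'Z_2) = 1%N. Proof. by []. Qed.

Lemma sgnZ2_0 (V : zmodType) (f : V) : sgnZ2 0 f = f.
Proof. by rewrite /sgnZ2 expr0 mulr1z. Qed.

Lemma sgnZ2_1 (V : zmodType) (f : V) : sgnZ2 1 f = - f.
Proof. by rewrite /sgnZ2 expr1 mulrN1z. Qed.

Lemma sgnZ2_of0 (V : zmodType) (k : 'Z_2) : sgnZ2 k (0 : V) = 0.
Proof. by rewrite /sgnZ2 mul0rz. Qed.

Lemma model_addE (F : zmodType) (y : F) f1 k1 f2 k2 :
  model_add y (f1, k1) (f2, k2) = (f1 + sgnZ2 k1 f2 + y *+ (k1 * k2), k1 + k2).
Proof. by []. Qed.

Lemma model_circE (F : zmodType) (y : F) psi f1 k1 f2 k2 :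
  model_circ y psi (f1, k1) (f2, k2) =
  (f1 + sgnZ2 k1 f2 + psi f1 k1 k2 + y *+ (k1 * k2), k1 + k2).
Proof. by []. Qed.

(* If psi is onto F, then so is f |-> (-1)^k1 psi(f,k1,1) for suitable k1:
   this is what makes the elements with second coordinate 1 a single orbit. *)
Lemma model_psi_signed_onto (F : zmodType) (phi : {additive F -> F}) (z : F) :
  (forall w : F, exists f k1 k2, model_psi phi z f k1 k2 = w) ->
  forall w : F, exists f k1, sgnZ2 k1 (model_psi phi z f k1 1) = w.
Proof.
move=> psi_onto w; have [f [k1 [k2 e]]] := psi_onto (- w).
move: e; rewrite /model_psi; case: (Z2_cases k2) => ->; rewrite ?Z2_val0 ?Z2_val1.
  rewrite mulr0n => /eqP; rewrite eq_sym oppr_eq0 => /eqP ->.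
  by exists 0, 0; rewrite sgnZ2_0 Z2_val0 ?Z2_val1 mulr0n subr0 raddf0.
case: (Z2_cases k1) => ->; rewrite ?Z2_val0 ?Z2_val1 mulr1n ?mulr0n ?subr0 => e.
  by exists (- f), 0; rewrite sgnZ2_0 Z2_val0 ?Z2_val1 mulr0n subr0 mulr1n raddfN e opprK.
by exists f, 1; rewrite sgnZ2_1 ?Z2_val1 !mulr1n e opprK.
Qed.

Section ModelLambda.
Variables (F : zmodType) (y : F) (psi : F -> 'Z_2 -> 'Z_2 -> F).
Variables (T : finType) (A : skew_brace T) (f : T -> F * 'Z_2).
Hypothesis f_add : forall a b, f (sb_add A a b) = model_add y (f a) (f b).
Hypothesis f_circ : forall a b, f (sb_circ A a b) = model_circ y psi (f a) (f b).

Lemma model_lambda a b :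
  f (sb_lambda A a b) =
  ((f b).1 + sgnZ2 (f a).2 (psi (f a).1 (f a).2 (f b).2), (f b).2).
Proof.
have := f_circ a b; rewrite -lambda_circ f_add.
case: (f a) => f1 k1; case: (f b) => f2 k2; case: (f (sb_lambda A a b)) => g1 k.
rewrite /model_add /model_circ => e.
have ek : k = k2 by apply: (@addrI _ k1); apply: (congr1 snd e).
subst k.
have e1 := congr1 fst e; rewrite /= in e1.
move/addIr: e1; rewrite -addrA => /addrI.
case: (Z2_cases k1) => ->; rewrite ?sgnZ2_0 ?sgnZ2_1; first by move=> ->.
by move=> e1; rewrite -[g1]opprK e1 opprD opprK.
Qed.
End ModelLambda.

(* Backward direction: in the model, elements (f,0) are lambda-fixed and the
   elements (f,1) form one orbit of size |F| > 1. *)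
Lemma model_one_vertex (F : zmodType) (y z : F) (phi : {additive F -> F})
    (T : finType) (A : skew_brace T) :
  (exists f : F, f != 0) ->
  (forall w : F, exists f k1 k2, model_psi phi z f k1 k2 = w) ->
  sb_iso_to A (model_add y) (model_circ y (model_psi phi z)) ->
  #|Lambda_vertices A| = 1%N.
Proof.
move=> [f0 nz_f0] psi_onto [f [[g fK gK] f_hom]].
have f_lam := @model_lambda _ _ _ _ _ f
  (fun a b => (f_hom a b).1) (fun a b => (f_hom a b).2).
have signed_onto := @model_psi_signed_onto _ _ _ psi_onto.
apply/one_vertexP; exists (g (0, 1)).
  have [f1 [k1 e]] := signed_onto f0.
  apply/negP => /lambda_fixedP /(_ (g (f1, k1))) /(congr1 f).
  by rewrite f_lam !gK /= e add0r => -[] /eqP; apply/negP.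
move=> x x_nfix; have x_odd : (f x).2 = 1.
  case: (Z2_cases (f x).2) => // x_even; case/negP: x_nfix.
  apply/lambda_fixedP => a; apply: (can_inj fK); rewrite f_lam x_even.
  by rewrite /model_psi Z2_val0 mulr0n sgnZ2_of0 addr0 -x_even -surjective_pairing.
have [f1 [k1 e]] := signed_onto (f x).1.
apply/imsetP; exists (g (f1, k1)) => //; apply: (can_inj fK).
by rewrite f_lam !gK /= e add0r -x_odd -surjective_pairing.
Qed.

Section OneVertexStructure.
Variables (T : finType) (A : skew_brace T) (t : T).
Local Notation "x ⊕ y" := (sb_add A x y) (at level 50, left associativity).
Local Notation "x ⊙ y" := (sb_circ A x y) (at level 40, left associativity).
Local Notation "⊖ x" := (sb_opp A x) (at level 35, right associativity).
Local Notation zero := (sb_zero A).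
Local Notation lam := (sb_lambda A).
Local Notation H := (lambda_fixed A).

Hypothesis t_nfix : t \notin H.
Hypothesis orbit_t : forall x, x \notin H -> x \in lambda_orbit A t.

Lemma nonfixed_orbit_t : ~: H = lambda_orbit A t.
Proof.
apply/setP => x; rewrite inE; apply/idP/idP; first exact: orbit_t.
exact: orbit_nonfixedW t_nfix.
Qed.

Lemma coset_t_nonfixed {h} : h \in H -> t ⊕ h \notin H.
Proof. by move=> hH; apply: contra t_nfix; apply: fixedDl. Qed.

(* H has index two in (A,+): its only other coset is t + H.  Indeed t + H
   lies in the complement of H, and by orbit-stabilizer |~H| = |orbit t|
   divides |A| = |H| + |~H|, hence divides |H|. *)
Lemma coset_t : [set t ⊕ h | h in H] = ~: H.
Proof.
have add_inj : injective (sb_add A t) by move=> a b; apply: sb_addIl.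
apply/eqP; rewrite eqEcard card_imset //; apply/andP; split.
  by apply/subsetP => x /imsetP [h hH ->]; rewrite inE coset_t_nonfixed.
have := orbit_card_dvd (A := A) t.
rewrite -nonfixed_orbit_t -(cardsC H) dvdn_addl // => /dvdn_leq; apply.
by rewrite card_gt0; apply/set0Pn; exists zero; apply: fixed0.
Qed.

Lemma nonfixed_coset {x} : x \notin H -> exists2 h, h \in H & x = t ⊕ h.
Proof.
by move=> x_nfix; have /imsetP [h ? ->] : x \in [set t ⊕ h | h in H];
  [rewrite coset_t inE | exists h].
Qed.

(* |H| = |t + H| = |orbit t| > 1. *)
Lemma fixed_card_gt1 : (1 < #|H|)%N.
Proof.
have add_inj : injective (sb_add A t) by move=> a b; apply: sb_addIl.
by rewrite -(card_imset _ add_inj) coset_t nonfixed_orbit_t orbit_nonfixed.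
Qed.

(* t + t lies in H, since t + t = t + h would force t = h in H. *)
Lemma double_t_fixed : t ⊕ t \in H.
Proof.
apply/negPn/negP => /nonfixed_coset [h hH e].
by move: t_nfix; rewrite (sb_addIl e) hH.
Qed.

Definition delta (a : T) : T := ⊖ t ⊕ lam a t.

Lemma lambda_t a : lam a t = t ⊕ delta a.
Proof. by rewrite sb_addNKl. Qed.

Lemma delta_fixed a : delta a \in H.
Proof.
have /nonfixed_coset [h hH e] : lam a t \notin H.
  by apply: (orbit_nonfixedW t_nfix); apply/imsetP; exists a.
by rewrite /delta e sb_addKl.
Qed.

(* delta is onto H, because every t + h lies in the orbit of t. *)
Lemma delta_onto {h} : h \in H -> exists a, delta a = h.
Proof.
move=> hH; have /orbit_t /imsetP [a _ e] := coset_t_nonfixed hH.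
by exists a; rewrite /delta -e sb_addKl.
Qed.

Lemma delta_id : delta zero = zero.
Proof. by rewrite /delta lambda_id sb_addNx. Qed.

Lemma deltaM a b : delta (a ⊙ b) = delta a ⊕ delta b.
Proof.
rewrite {1}/delta lambdaM lambda_t lambdaD lambda_t.
by have /lambda_fixedP -> := delta_fixed b; rewrite sb_addA sb_addKl.
Qed.

(* Every element of H inverts t by conjugation: h + t + h = t, because
   lambda fixes t + t and lambda_a(t) runs through t + H. *)
Lemma fixed_conj_t {h} : h \in H -> h ⊕ t ⊕ h = t.
Proof.
move=> /delta_onto [a <-]; have /lambda_fixedP /(_ a) := double_t_fixed.
by rewrite lambdaD lambda_t -!sb_addA => /sb_addIl; rewrite !sb_addA.
Qed.

Lemma t_commute {h} : h \in H -> t ⊕ h = ⊖ h ⊕ t.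
Proof. by move=> /fixedN /fixed_conj_t {1}<-; rewrite sb_addNKr. Qed.

Lemma fixed_commute {h1 h2} : h1 \in H -> h2 \in H -> h1 ⊕ h2 = h2 ⊕ h1.
Proof.
move=> h1H h2H; rewrite -[LHS](sb_oppK (A:=A)) -[RHS](sb_oppK (A:=A)).
congr (⊖ _); apply: (sb_addIr (A := A) (a := t)).
rewrite -(t_commute (fixedD h1H h2H)) sb_oppD.
by rewrite -[RHS]sb_addA -(t_commute h2H) [RHS]sb_addA -(t_commute h1H) sb_addA.
Qed.

(* The abelian group F := H, as a subtype of T. *)
Definition Fix := {x : T | x \in H}.
HB.instance Definition _ := Finite.on Fix.

Definition Fix_zero : Fix := exist _ zero fixed0.
Definition Fix_add (u v : Fix) : Fix :=
  exist _ (val u ⊕ val v) (fixedD (valP u) (valP v)).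
Definition Fix_opp (u : Fix) : Fix := exist _ (⊖ val u) (fixedN (valP u)).

Lemma Fix_addA : associative Fix_add.
Proof. by move=> u v w; apply: val_inj; rewrite /= sb_addA. Qed.

Lemma Fix_addC : commutative Fix_add.
Proof. by move=> u v; apply: val_inj; rewrite /= (fixed_commute (valP u) (valP v)). Qed.

Lemma Fix_add0 : left_id Fix_zero Fix_add.
Proof. by move=> u; apply: val_inj; rewrite /= sb_add0x. Qed.

Lemma Fix_addN : left_inverse Fix_zero Fix_opp Fix_add.
Proof. by move=> u; apply: val_inj; rewrite /= sb_addNx. Qed.

HB.instance Definition _ :=
  GRing.isZmodule.Build Fix Fix_addA Fix_addC Fix_add0 Fix_addN.

(* Projection of T onto F, meaningful on H. *)
Definition toFix (x : T) : Fix := insubd (0 : Fix) x.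

Lemma toFixK x : x \in H -> val (toFix x) = x.
Proof. by move=> xH; rewrite val_insubd xH. Qed.

Lemma toFix_val (u : Fix) : toFix (val u) = u.
Proof. exact: valKd. Qed.

Definition deltaF (a : T) : Fix := exist _ (delta a) (delta_fixed a).

Lemma deltaFM a b : deltaF (a ⊙ b) = deltaF a + deltaF b.
Proof. by apply: val_inj; rewrite /= deltaM. Qed.

(* ... hence, o and + agreeing on H, it is additive on F. *)
Lemma deltaF_add (u v : Fix) :
  deltaF (val (u + v)) = deltaF (val u) + deltaF (val v).
Proof. by rewrite -deltaFM circ_fixed // (valP v). Qed.

Lemma deltaF_opp (u : Fix) : deltaF (val (- u)) = - deltaF (val u).
Proof.
apply/eqP; rewrite -addr_eq0 -deltaF_add addNr.
by apply/eqP/val_inj; rewrite /= delta_id.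
Qed.

Definition yF : Fix := exist _ (t ⊕ t) double_t_fixed.

Definition phiF (u : Fix) : Fix := - deltaF (val u).

Lemma phiF_is_zmod_morphism : zmod_morphism phiF.
Proof. by move=> u v; rewrite /phiF deltaF_add deltaF_opp opprD opprK. Qed.

HB.instance Definition _ :=
  GRing.isZmodMorphism.Build Fix Fix phiF phiF_is_zmod_morphism.

Definition zF : Fix := - deltaF t.

Lemma coset_add_fixed (u v : Fix) : val u ⊕ t ⊕ val v = val (u - v) ⊕ t.
Proof. by rewrite -sb_addA (t_commute (valP v)) sb_addA. Qed.

Lemma coset_add_coset (u v : Fix) : val u ⊕ t ⊕ (val v ⊕ t) = val (u - v + yF).
Proof. by rewrite sb_addA coset_add_fixed -sb_addA. Qed.

Lemma lambda_coset a (u : Fix) : lam a (val u ⊕ t) = val (u - deltaF a) ⊕ t.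
Proof.
rewrite lambdaD; have /lambda_fixedP -> := valP u.
by rewrite lambda_t (t_commute (delta_fixed a)) sb_addA.
Qed.

Lemma fixed_circ_t (u : Fix) : val u ⊙ t = val (u - deltaF (val u)) ⊕ t.
Proof. by rewrite -lambda_circ lambda_t (t_commute (delta_fixed _)) sb_addA. Qed.

(* delta(u + t) = delta(t) - delta(u), since u + t = t o (-u). *)
Lemma deltaF_coset (u : Fix) : deltaF (val u ⊕ t) = deltaF t - deltaF (val u).
Proof.
have -> : val u ⊕ t = t ⊙ val (- u).
  by rewrite circ_fixed ?(valP (- u)) // (t_commute (valP (- u))) sb_oppK.
by rewrite deltaFM deltaF_opp.
Qed.

(* delta doubles on its image: delta(delta(u)) = 2 delta(u), read off from
   delta(u o t) = delta(u) + delta(t). *)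
Lemma deltaF_deltaF (u : Fix) :
  deltaF (val (deltaF (val u))) = deltaF (val u) *+ 2.
Proof.
have := deltaFM (val u) t; rewrite fixed_circ_t deltaF_coset.
rewrite deltaF_add deltaF_opp opprD opprK [RHS]addrC => /addrI /eqP.
by rewrite addrC subr_eq => /eqP ->; rewrite mulr2n.
Qed.

(* delta(t o t) = 2 delta(t), with t o t = y + delta(t). *)
Lemma deltaF_circ_tt : deltaF (val yF) + deltaF (val (deltaF t)) = deltaF t *+ 2.
Proof.
rewrite -deltaF_add mulr2n -deltaFM -lambda_circ lambda_t sb_addA.
by congr deltaF.
Qed.

(* 2y = 0: the conjugation identity for h = t + t reads 4t = 0. *)
Lemma yF_order2 : yF *+ 2 = 0.
Proof.
apply: val_inj; apply: (sb_addIl (A := A) (a := t)).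
have := fixed_conj_t double_t_fixed.
by rewrite mulr2n /= sb_addx0 !sb_addA.
Qed.

Lemma phiF_zF : phiF zF = phiF yF - zF *+ 2.
Proof.
by rewrite /phiF /zF deltaF_opp opprK mulNrn opprK -deltaF_circ_tt addKr.
Qed.

Lemma phiF_phiF (u : Fix) : phiF (phiF u) = - (phiF u *+ 2).
Proof. by rewrite /phiF deltaF_opp opprK deltaF_deltaF mulNrn opprK. Qed.

Local Notation psiF := (model_psi phiF zF).

Lemma F_nontrivial : exists u : Fix, u != 0.
Proof.
have := fixed_card_gt1; rewrite (cardsD1 zero) fixed0 add1n ltnS card_gt0.
case/set0Pn => h; rewrite in_setD1 => /andP [nz_h hH].
exists (toFix h); apply: contra nz_h => /eqP/(congr1 val).
by rewrite toFixK // => ->.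
Qed.

Definition embed (p : Fix * 'Z_2) : T :=
  if nat_of_ord p.2 == 0%N then val p.1 else val p.1 ⊕ t.

Lemma embed0 u : embed (u, 0) = val u. Proof. by []. Qed.
Lemma embed1 u : embed (u, 1) = val u ⊕ t. Proof. by []. Qed.

Definition coords (x : T) : Fix * 'Z_2 :=
  if x \in H then (toFix x, 0) else (toFix (x ⊕ ⊖ t), 1).

Lemma coordsK : cancel coords embed.
Proof.
move=> x; rewrite /coords; case: ifP => xH; first by rewrite /embed /= toFixK.
have [h hH ->] := nonfixed_coset (negbT xH).
rewrite /embed /= (t_commute hH) sb_addKr toFixK ?fixedN //.
Qed.

Lemma embedK : cancel embed coords.
Proof.
move=> [u k]; case: (Z2_cases k) => ->; rewrite /embed /coords /=.
  by rewrite (valP u) toFix_val.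
have xH : val u ⊕ t \notin H by apply: contra t_nfix; apply: fixedDr (valP u).
by rewrite (negbTE xH) sb_addKr toFix_val.
Qed.

Lemma embed_add p q : embed (model_add yF p q) = embed p ⊕ embed q.
Proof.
case: p q => [u k1] [v k2].
case: (Z2_cases k1) => ->; case: (Z2_cases k2) => ->;
  rewrite model_addE ?sgnZ2_0 ?sgnZ2_1 ?Z2_val0 ?Z2_val1 ?muln0 ?mul0n ?muln1
    ?mulr0n ?mulr1n ?addr0 ?add0r ?embed0 ?embed1.
- by [].
- by rewrite sb_addA.
- by rewrite coset_add_fixed.
- by rewrite coset_add_coset.
Qed.

Lemma embed_circ p q : embed (model_circ yF psiF p q) = embed p ⊙ embed q.
Proof.
case: p q => [u k1] [v k2].
case: (Z2_cases k1) => ->; case: (Z2_cases k2) => ->;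
  rewrite model_circE /model_psi ?sgnZ2_0 ?sgnZ2_1 ?Z2_val0 ?Z2_val1 ?muln0 ?mul0n
    ?muln1 ?mulr0n ?mulr1n ?subr0 ?addr0 ?add0r ?embed0 ?embed1.
- by rewrite circ_fixed // (valP v).
- by rewrite -lambda_circ lambda_coset sb_addA /phiF -addrA.
- by rewrite circ_fixed ?(valP v) // coset_add_fixed.
- rewrite -lambda_circ lambda_coset coset_add_coset deltaF_coset /phiF /zF.
  apply: (congr1 val); apply: (congr1 (fun w => w + yF)).
  rewrite opprK [in RHS]opprB [RHS]addrA [RHS]addrAC.
  by rewrite (addrC (- deltaF (val u))).
Qed.

(* psi is onto since delta is: delta(u) = psi(-u,0,1), delta(u+t) = psi(u,1,1). *)
Lemma psiF_onto (w : Fix) : exists (u : Fix) (k1 k2 : 'Z_2), psiF u k1 k2 = w.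
Proof.
have [a ea] := delta_onto (valP w).
have <- : deltaF a = w by apply: val_inj.
rewrite -(coordsK a); case: (coords a) => u k; case: (Z2_cases k) => ->.
  exists (- u), 0, 1; rewrite embed0 /model_psi Z2_val0 Z2_val1 mulr0n subr0 mulr1n.
  by rewrite raddfN /phiF opprK.
exists u, 1, 1; rewrite embed1 /model_psi Z2_val1 !mulr1n /phiF /zF opprK.
by rewrite deltaF_coset addrC.
Qed.

Lemma one_vertex_model : exists (F : finZmodType) (y z : F) (phi : {additive F -> F}),
    (exists f : F, f != 0) /\
    y *+ 2 = 0 /\
    phi z = phi y - z *+ 2 /\
    (forall f : F, phi (phi f) = - (phi f *+ 2)) /\
    (forall g : F, exists (f : F) (k1 k2 : 'Z_2), model_psi phi z f k1 k2 = g) /\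
    sb_iso_to A (model_add y) (model_circ y (model_psi phi z)).
Proof.
exists (Fix : finZmodType), yF, zF, (phiF : {additive Fix -> Fix}).
split; first exact: F_nontrivial.
split; first exact: yF_order2.
split; first exact: phiF_zF.
split; first exact: phiF_phiF.
split; first exact: psiF_onto.
exists coords; split; first by exists embed; [apply: coordsK | apply: embedK].
by move=> a b; split; apply: (can_inj embedK); rewrite ?embed_add ?embed_circ !coordsK.
Qed.
End OneVertexStructure.

Theorem mainTheorem16 (T : finType) (A : skew_brace T) :
  #|Lambda_vertices A|%N = 1%N <->
  exists (F : finZmodType) (y z : F) (phi : {additive F -> F}),
    (exists f : F, f != 0) /\
    y *+ 2 = 0 /\
    phi z = phi y - z *+ 2 /\
    (forall f : F, phi (phi f) = - (phi f *+ 2)) /\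
    (forall g : F, exists (f : F) (k1 k2 : 'Z_2), model_psi phi z f k1 k2 = g) /\
    sb_iso_to A (model_add y) (model_circ y (model_psi phi z)).
Proof.
split=> [/one_vertexP [t t_nfix orbit_t] | ].
  exact: (@one_vertex_model T A t t_nfix orbit_t).
move=> [F [y [z [phi [F_nontriv [_ [_ [_ [psi_onto iso]]]]]]]]].
exact: model_one_vertex F_nontriv psi_onto iso.
Qed.
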